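(* Let $C:2^M\to\mathbb{R}_{\ge 0}$ be a normalized cost function. There is a unique function $P_C$ on allocations with $P_C(\vec\emptyset)=0$ such that for every allocation $\vec S=(S_1,\dots,S_n)$, $$\sum_{i\in N}\left[P_C(\vec S)-P_C(\vec S-S_i)\right]=C(\vec S).$$ Moreover, this function is given by $$P_C(\vec S)=\sum_{\emptyset\neq I\subseteq N}\frac{C\left(\bigcup_{i\in I}S_i\right)}{|I|\cdot\binom{n}{|I|}}.$$
   Context: Setting. $N=\{1,\dots,n\}$ is a set of players and $M_1,\dots,M_n$ are pairwise disjoint finite sets; $M=\bigcup_i M_i$. An allocation is a vector $\vec S=(S_1,\dots,S_n)$ with $S_i\subseteq M_i$; since the $M_i$ are disjoint, allocations are identified with subsets $\bigcup_i S_i$ of $M$, so a function on allocations is a set function on $2^M$. Set operations between allocations are componentwise, $\vec\emptyset=(\emptyset,\dots,\emptyset)$, and $\vec S-S_i$ denotes the allocation obtained from $\vec S$ by replacing its $i$-th component with $\emptyset$. A cost function $C:2^M\to\mathbb{R}_{\ge0}$ is normalized if $C(\emptyset)=0$. *)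

From HB Require Import structures.
From mathcomp Require Import all_boot all_order all_algebra.
Set Implicit Arguments. Unset Strict Implicit. Unset Printing Implicit Defensive.
Import Order.TTheory GRing.Theory Num.Theory.
Local Open Scope ring_scope.

(* Resources: a finite type T (= M).  The pairwise disjoint
   sets M_i are encoded by an ownership map owner : T -> 'I_n, with
   M_i = [set x | owner x == i].  An allocation is identified with a subset
   S of M; its i-th component is S_i = S :&: M_i. *)

Definition Mi (T : finType) (n : nat) (owner : T -> 'I_n) (i : 'I_n) : {set T} :=
  [set x | owner x == i].

Definition comp (T : finType) (n : nat) (owner : T -> 'I_n) (S : {set T}) (i : 'I_n)
  : {set T} := S :&: Mi owner i.

(* S - S_i : replace the i-th component by the empty set *)
Definition remove_comp (T : finType) (n : nat) (owner : T -> 'I_n) (S : {set T})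
  (i : 'I_n) : {set T} := S :\: Mi owner i.

Definition PC (R : realFieldType) (T : finType) (n : nat) (owner : T -> 'I_n)
  (C : {set T} -> R) (S : {set T}) : R :=
  \sum_(I : {set 'I_n} | I != set0)
     C (\bigcup_(i in I) comp owner S i) / ((#|I| * 'C(n, #|I|))%N)%:R.

From Pilot Require Import Defs.
From HB Require Import structures.
From mathcomp Require Import all_boot all_order all_algebra.
Import Order.TTheory GRing.Theory Num.Theory.

Set Implicit Arguments.
Unset Strict Implicit.
Unset Printing Implicit Defensive.

Local Open Scope ring_scope.

(* For a set function F on coalitions of players, the coalition I contributes
   F I / (#|I| C(n, #|I|)) to the potential.  Summing the marginals over all
   players counts F I once for each of its #|I| members, and counts F J with
   the opposite sign once for each of the n - #|J| players outside J; the
   identity (k+1) C(n, k+1) = (n - k) C(n, k) makes both coefficients equal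
   to 1 / C(n, #|I|), so everything cancels except F [set: N] - F set0.
   Uniqueness follows by induction on #|S|: if D has zero marginals and
   vanishes on smaller allocations, the marginal sum at S is D S times the
   number of players active in S. *)

Lemma natr_mul_invK (R : numFieldType) (m b : nat) : (0 < m)%N ->
  (((m * b)%N)%:R : R)^-1 *+ m = b%:R^-1.
Proof.
move=> m_gt0; rewrite -[_ *+ m]mulr_natl natrM invfM mulrA mulfV ?mul1r //.
by rewrite pnatr_eq0 -lt0n.
Qed.

Section CoalitionPotential.
Variables (R : numFieldType) (N : finType).
Implicit Types (F : {set N} -> R) (I J : {set N}).
Local Notation n := #|N|.

Definition coalition_weight (k : nat) : R := (((k * 'C(n, k))%N)%:R)^-1.

Definition coalition_potential F : R :=
  \sum_(I : {set N} | I != set0) F I * coalition_weight #|I|.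

(* The empty coalition has weight 0^-1 = 0. *)
Lemma coalition_potentialE F :
  coalition_potential F = \sum_I F I * coalition_weight #|I|.
Proof.
by rewrite [RHS](bigD1 set0) //= cards0 /coalition_weight mul0n invr0 mulr0 add0r.
Qed.

Lemma coalition_weight_card k : (0 < k)%N ->
  coalition_weight k *+ k = 'C(n, k)%:R^-1.
Proof. exact: natr_mul_invK. Qed.

Lemma coalition_weight_succ k : (k < n)%N ->
  coalition_weight k.+1 *+ (n - k) = 'C(n, k)%:R^-1.
Proof.
by move=> lt_kn; rewrite /coalition_weight mul_bin_left natr_mul_invK ?subn_gt0.
Qed.

Lemma sum_members (G : {set N} -> R) :
  \sum_(i : N) \sum_(I : {set N} | i \in I) G I = \sum_I G I *+ #|I|.
Proof.
rewrite (exchange_big_dep predT) //=; apply: eq_bigr => I _.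
exact: sumr_const.
Qed.

Lemma sum_members_setD1 (G : {set N} -> R) :
  \sum_(i : N) \sum_(I : {set N} | i \in I) G (I :\ i) = \sum_J G J *+ (n - #|J|).
Proof.
transitivity (\sum_(i : N) \sum_(J : {set N} | i \notin J) G J).
  apply: eq_bigr => i _.
  rewrite (reindex_onto (fun J : {set N} => i |: J) (fun I : {set N} => I :\ i));
    last exact: setD1K.
  apply: eq_big => [J|J /andP[_ /eqP -> //]].
  by rewrite setU11 /=; apply/idP/idP => [/eqP <-|/setU1K ->]; rewrite ?setD11.
rewrite (exchange_big_dep predT) //=; apply: eq_bigr => J _.
rewrite sumr_const -(setCK J) -cardsCs setCK; congr (_ *+ _).
by apply: eq_card => i; rewrite !inE.
Qed.

Lemma coalition_potential_marginals F :
  \sum_(i : N) (coalition_potential F - coalition_potential (fun I => F (I :\ i)))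
    = F [set: N] - F set0.
Proof.
have marginal i : coalition_potential F - coalition_potential (fun I => F (I :\ i))
    = \sum_(I : {set N} | i \in I) (F I * coalition_weight #|I|
                          - F (I :\ i) * coalition_weight #|I :\ i|.+1).
  rewrite !coalition_potentialE -sumrB (bigID (fun I => i \in I)) /=.
  rewrite [X in _ + X]big1 ?addr0 => [|I iI]; last first.
    suff -> : I :\ i = I by rewrite subrr.
    by apply/setP => x; rewrite !inE; case: eqP => [->|//]; rewrite (negbTE iI).
  by apply: eq_bigr => I iI; rewrite (cardsD1 i I) iI.
have members I : F I * coalition_weight #|I| *+ #|I|
    = F I / 'C(n, #|I|)%:R - (if I == set0 then F set0 else 0).
  case: eqP => [->|/eqP I0]; first by rewrite cards0 bin0 invr1 mulr1 subrr.
  by rewrite subr0 -mulrnAr coalition_weight_card // card_gt0.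
have outsiders J : F J * coalition_weight #|J|.+1 *+ (n - #|J|)
    = F J / 'C(n, #|J|)%:R - (if J == setT then F setT else 0).
  case: eqP => [->|/eqP JT]; first by rewrite cardsT subnn binn invr1 mulr1 subrr.
  by rewrite subr0 -mulrnAr coalition_weight_succ // -cardsT proper_card ?properT.
under eq_bigr do rewrite marginal sumrB.
rewrite sumrB sum_members (sum_members_setD1 (fun J => F J * coalition_weight #|J|.+1)).
under eq_bigr do rewrite members.
under [X in _ - X]eq_bigr do rewrite outsiders.
by rewrite !sumrB -!big_mkcond !big_pred1_eq addrC opprB addrA subrK.
Qed.

End CoalitionPotential.

Section Allocations.
Variables (T : finType) (n : nat) (owner : T -> 'I_n).
Implicit Types (S : {set T}) (I : {set 'I_n}).

Definition coalition_union S I : {set T} := [set x in S | owner x \in I].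

Lemma bigcup_compE S I : \bigcup_(i in I) Defs.comp owner S i = coalition_union S I.
Proof.
apply/setP => x; rewrite inE; apply/bigcupP/andP.
  by case=> j jI; rewrite /Defs.comp /Mi !inE => /andP[-> /eqP ->].
by case=> xS oI; exists (owner x) => //; rewrite /Defs.comp /Mi !inE xS eqxx.
Qed.

Lemma coalition_union_remove S i I :
  coalition_union (remove_comp owner S i) I = coalition_union S (I :\ i).
Proof.
apply/setP => x; rewrite /remove_comp /Mi !inE.
by case: (owner x == i); rewrite ?andbF.
Qed.

Lemma coalition_unionT S : coalition_union S setT = S.
Proof. by apply/setP => x; rewrite !inE andbT. Qed.

Lemma coalition_union0 S : coalition_union S set0 = set0.
Proof. by apply/setP => x; rewrite !inE andbF. Qed.

Lemma coalition_union0s I : coalition_union set0 I = set0.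
Proof. by apply/setP => x; rewrite !inE. Qed.

Lemma PCE (R : realFieldType) (C : {set T} -> R) S :
  PC owner C S = coalition_potential (fun I => C (coalition_union S I)).
Proof.
rewrite /PC /coalition_potential /coalition_weight card_ord.
by apply: eq_bigr => I _; rewrite bigcup_compE.
Qed.

Lemma PC_marginals (R : realFieldType) (C : {set T} -> R) S :
  \sum_(i < n) (PC owner C S - PC owner C (remove_comp owner S i)) = C S - C set0.
Proof.
rewrite -[in C S](coalition_unionT S) -[in C set0](coalition_union0 S).
rewrite -(coalition_potential_marginals (fun I => C (coalition_union S I))).
apply: eq_bigr => i _; rewrite !PCE; congr (_ - _).
by apply: eq_bigr => I _; rewrite coalition_union_remove.
Qed.

Lemma remove_comp_proper S i :
  remove_comp owner S i != S -> remove_comp owner S i \proper S.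
Proof. by rewrite properEneq subsetDl andbT. Qed.

Lemma remove_comp_owner S x : x \in S -> remove_comp owner S (owner x) != S.
Proof.
by move=> xS; apply/eqP => /setP/(_ x); rewrite /remove_comp /Mi !inE eqxx xS.
Qed.

Lemma eq0_of_marginals_eq0 (R : numDomainType) (D : {set T} -> R) :
  D set0 = 0 ->
  (forall S, \sum_(i < n) (D S - D (remove_comp owner S i)) = 0) ->
  forall S, D S = 0.
Proof.
move=> D0 dD0; suff DS k S : (#|S| <= k)%N -> D S = 0 by move=> S; exact: (DS #|S|).
elim: k S => [|k IH] S; first by rewrite leqn0 cards_eq0 => /eqP ->.
move=> leSk; have [->|[x xS]] := set_0Vmem S; first exact: D0.
have : \sum_(i < n) D S *+ (remove_comp owner S i != S) = 0.
  rewrite -[RHS](dD0 S); apply: eq_bigr => i _.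
  have [->|ne] := eqVneq (remove_comp owner S i) S; first by rewrite subrr.
  rewrite mulr1n (IH (remove_comp owner S i)) ?subr0 // -ltnS.
  exact: leq_trans (proper_card (remove_comp_proper ne)) _.
rewrite sumrMnr => /eqP; rewrite mulrn_eq0 => /orP[|/eqP //].
by rewrite sum_nat_eq0 => /forallP/(_ (owner x)); rewrite remove_comp_owner.
Qed.

End Allocations.

Theorem proposition3p1 (R : realFieldType) (T : finType) (n : nat)
  (owner : T -> 'I_n) (C : {set T} -> R)
  (C_nonneg : forall S, 0 <= C S) (C_norm : C set0 = 0) :
  (PC owner C set0 = 0 /\
   forall S : {set T},
     \sum_(i < n) (PC owner C S - PC owner C (remove_comp owner S i)) = C S) /\
  (forall P : {set T} -> R,
     P set0 = 0 ->
     (forall S : {set T},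
        \sum_(i < n) (P S - P (remove_comp owner S i)) = C S) ->
     forall S : {set T}, P S = PC owner C S).
Proof.
have PC0 : PC owner C set0 = 0.
  by rewrite PCE; apply: big1 => I _; rewrite coalition_union0s C_norm mul0r.
have PC_marg S : \sum_(i < n) (PC owner C S - PC owner C (remove_comp owner S i))
    = C S by rewrite PC_marginals C_norm subr0.
split=> // P P0 P_marg S; apply: subr0_eq; move: S.
apply: (eq0_of_marginals_eq0 (D := fun S => P S - PC owner C S)) => [|S].
  by rewrite P0 PC0 subrr.
transitivity (\sum_(i < n) (P S - P (remove_comp owner S i))
              - \sum_(i < n) (PC owner C S - PC owner C (remove_comp owner S i))).
  by rewrite -sumrB; apply: eq_bigr => i _; rewrite !opprD !opprK addrACA.
by rewrite P_marg PC_marg subrr.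
Qed.
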